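(* Let $q$ be a prime power, let $n$ be an even positive integer, and let $Z$ be a set of $q^n$ matrices over $\mathbb{F}_{q^2}$ of size $n/2\times n/2$ with the property that $A-B$ is nonsingular for all distinct $A,B\in Z$. Let \[ Y=\left\{\begin{pmatrix} I & A^*\\ A & AA^*\end{pmatrix}:A\in Z\right\}\cup\left\{\begin{pmatrix} O & O\\ O & I\end{pmatrix}\right\}, \] where $O$ and $I$ are the zero and identity matrices of size $n/2\times n/2$. Then $Y$ is an $n$-code in $X(n,q)$ of size $q^n+1$.
   Context: For a matrix $A$ over $\mathbb{F}_{q^2}$, $A^*$ denotes the transpose of the matrix obtained by applying $x\mapsto x^q$ to each entry. $X(n,q)$ is the set of $n\times n$ matrices $A$ over $\mathbb{F}_{q^2}$ with $A^*=A$ (Hermitian matrices). A nonempty subset $Y\subseteq X(n,q)$ is a $d$-code if $\operatorname{rank}(A-B)\ge d$ for all distinct $A,B\in Y$. *)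

From HB Require Import structures.
From mathcomp Require Import all_boot all_order all_algebra.
Set Implicit Arguments. Unset Strict Implicit. Unset Printing Implicit Defensive.
Import GRing.Theory.
Local Open Scope ring_scope.

(* A^* : conjugate transpose w.r.t. the involution x |-> x^q of F_{q^2}. *)
Definition conjT (F : finFieldType) (q : nat) (m n : nat) (A : 'M[F]_(m, n))
  : 'M[F]_(n, m) := (map_mx (fun x => x ^+ q) A)^T.

Definition hermitian (F : finFieldType) (q n : nat) (A : 'M[F]_n) : bool :=
  conjT q A == A.

Definition is_dcode (F : finFieldType) (q n d : nat) (Y : {set 'M[F]_n}) : Prop :=
  [/\ Y != set0,
      (forall A, A \in Y -> hermitian q A) &
      (forall A B, A \in Y -> B \in Y -> A != B -> (d <= \rank (A - B)%R)%N)].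

From Pilot Require Import Defs.
From HB Require Import structures.
From mathcomp Require Import all_boot all_order all_algebra.
From mathcomp Require Import finfield.
Set Implicit Arguments. Unset Strict Implicit. Unset Printing Implicit Defensive.
Import GRing.Theory.
Local Open Scope ring_scope.

(* Since [x |-> x ^+ q] is an involutive automorphism of a field of order
   [q ^ 2], [A |-> A^*] is involutive and reverses products, so the codewords
   [[1, A^*; A, A A^*]] and [[0, 0; 0, 1]] are Hermitian.  Two codewords built
   from [A] and [B] differ by [[0, (A - B)^*; A - B, A A^* - B B^*]], which is
   invertible with [A - B]; a codeword minus [[0, 0; 0, 1]] is invertible
   because its Schur complement with respect to the identity block is [-1].
   So all differences have full rank, which also makes the codewords
   distinct. *)

Lemma exprD_pchar_pow (R : comNzRingType) p k (x y : R) : p \in [pchar R] ->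
  (x + y) ^+ (p ^ k) = x ^+ (p ^ k) + y ^+ (p ^ k).
Proof.
move=> pch; apply: exprDn_pchar.
by rewrite pnatX pnatE ?pch ?(pcharf_prime pch).
Qed.

Lemma expr_card_sqrtK (F : finFieldType) q (x : F) :
  #|F| = (q ^ 2)%N -> (x ^+ q) ^+ q = x.
Proof. by move=> cardF; rewrite -exprM -[(q * q)%N]/(q ^ 2)%N -cardF expf_card. Qed.

Section ConjugateTranspose.
Variables (F : finFieldType) (q : nat).
Hypotheses (exprqD : forall x y : F, (x + y) ^+ q = x ^+ q + y ^+ q)
           (exprqK : forall x : F, (x ^+ q) ^+ q = x).

Definition qpow (x : F) := x ^+ q.

Lemma qpow_nmod_morphism : nmod_morphism qpow.
Proof.
split=> [|x y]; last exact: exprqD.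
by apply: (addrI (qpow 0)); rewrite -exprqD !addr0.
Qed.

Lemma qpow_monoid_morphism : monoid_morphism qpow.
Proof. by split=> [|x y]; rewrite /qpow ?expr1n ?exprMn. Qed.

HB.instance Definition _ := GRing.isNmodMorphism.Build F F qpow qpow_nmod_morphism.
HB.instance Definition _ :=
  GRing.isMonoidMorphism.Build F F qpow qpow_monoid_morphism.

Lemma conjTE m n (A : 'M[F]_(m, n)) : conjT q A = (map_mx qpow A)^T.
Proof. by []. Qed.

Lemma conjTK m n (A : 'M[F]_(m, n)) : conjT q (conjT q A) = A.
Proof. by apply/matrixP => i j; rewrite !mxE exprqK. Qed.

Lemma conjT_block m1 m2 n1 n2 (A : 'M[F]_(m1, n1)) (B : 'M[F]_(m1, n2))
    (C : 'M[F]_(m2, n1)) (D : 'M[F]_(m2, n2)) :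
  conjT q (block_mx A B C D) = block_mx (conjT q A) (conjT q C) (conjT q B) (conjT q D).
Proof. by rewrite /conjT map_block_mx tr_block_mx. Qed.

Lemma conjT0 m n : conjT q (0 : 'M[F]_(m, n)) = 0.
Proof. by rewrite conjTE map_mx0 trmx0. Qed.

Lemma conjT1 n : conjT q (1%:M : 'M[F]_n) = 1%:M.
Proof. by rewrite conjTE map_mx1 trmx1. Qed.

Lemma conjTB m n (A B : 'M[F]_(m, n)) : conjT q (A - B) = conjT q A - conjT q B.
Proof. by rewrite !conjTE map_mxB linearB. Qed.

Lemma conjTM m n p (A : 'M[F]_(m, n)) (B : 'M[F]_(n, p)) :
  conjT q (A *m B) = conjT q B *m conjT q A.
Proof. by rewrite !conjTE map_mxM trmx_mul. Qed.

Lemma conjT_unitmx n (A : 'M[F]_n) : (conjT q A \in unitmx) = (A \in unitmx).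
Proof. by rewrite conjTE unitmx_tr map_unitmx. Qed.

End ConjugateTranspose.

Section BlockUnits.
Variable R : comUnitRingType.

Lemma block_mx_1_unitmx m n (B : 'M[R]_(m, n)) (A : 'M[R]_(n, m)) :
  block_mx 1%:M B A (A *m B - 1%:M) \in unitmx.
Proof.
suff /mulmx1_unit[] : block_mx 1%:M B A (A *m B - 1%:M)
    *m block_mx (1%:M - B *m A) B A (- 1%:M) = 1%:M by [].
rewrite mulmx_block (scalar_mx_block m n) !mul1mx !mulmxBr !mulmxBl !mulmxN.
rewrite !mulmx1 !mul1mx !mulmxA opprK; congr block_mx.
- by rewrite subrK.
- by rewrite subrr.
- by rewrite addrA subrK subrr.
- by rewrite addrA addrN add0r.
Qed.

Lemma block_mx_0_unitmx n (X Y W : 'M[R]_n) :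
  X \in unitmx -> Y \in unitmx -> block_mx 0 X Y W \in unitmx.
Proof.
move=> uX uY; suff /mulmx1_unit[] : block_mx 0 X Y W
    *m block_mx (- (invmx Y *m W *m invmx X)) (invmx Y) (invmx X) 0 = 1%:M by [].
rewrite mulmx_block (scalar_mx_block n n) !mul0mx !mulmx0 !mulmxV // !add0r !addr0.
by rewrite mulmxN !mulmxA mulmxV // mul1mx addNr.
Qed.

End BlockUnits.

Section HermitianGraph.
Variables (F : finFieldType) (q : nat).

(* [herm_graph A] is [G^* G] for [G = [1, A^*]]; [herm_infty] is the same
   construction for [G = [0, 1]]. *)
Definition herm_graph {m n} (A : 'M[F]_(n, m)) : 'M[F]_(m + n) :=
  block_mx 1%:M (conjT q A) A (A *m conjT q A).

Definition herm_infty m n : 'M[F]_(m + n) := block_mx 0 0 0 1%:M.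

Lemma herm_graph_inj m n : injective (@herm_graph m n).
Proof. by move=> A B /eq_block_mx[]. Qed.

Lemma rank_herm_graph_sub_infty m n (A : 'M[F]_(n, m)) :
  \rank (herm_graph A - herm_infty m n) = (m + n)%N.
Proof.
apply: mxrank_unit; rewrite opp_block_mx add_block_mx !oppr0 !addr0.
exact: block_mx_1_unitmx.
Qed.

Lemma card_herm_code m n (Z : {set 'M[F]_(n, m)}) : (0 < m + n)%N ->
  #|herm_graph @: Z :|: [set herm_infty m n]| = (#|Z| + 1)%N.
Proof.
move=> mn_gt0; rewrite setUC cardsU1 card_imset; last exact: herm_graph_inj.
suff -> : herm_infty m n \notin herm_graph @: Z by rewrite addnC.
apply/imsetP=> -[A _ infty_eq]; move: mn_gt0.
by rewrite -(rank_herm_graph_sub_infty A) -infty_eq subrr mxrank0.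
Qed.

Hypotheses (exprqD : forall x y : F, (x + y) ^+ q = x ^+ q + y ^+ q)
           (exprqK : forall x : F, (x ^+ q) ^+ q = x).

(* Unqualified, [hermitian] would parse as the notation of sesquilinear.v. *)
Lemma herm_graph_hermitian m n (A : 'M[F]_(n, m)) : Defs.hermitian q (herm_graph A).
Proof.
by apply/eqP; rewrite conjT_block conjTK // conjT1 // conjTM // conjTK.
Qed.

Lemma herm_infty_hermitian m n : Defs.hermitian q (herm_infty m n).
Proof. by apply/eqP; rewrite conjT_block !conjT0 ?conjT1. Qed.

Lemma rank_herm_graphB m (A B : 'M[F]_m) : A - B \in unitmx ->
  \rank (herm_graph A - herm_graph B) = (m + m)%N.
Proof.
move=> uAB; apply: mxrank_unit; rewrite opp_block_mx add_block_mx subrr -conjTB //.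
by apply: block_mx_0_unitmx; rewrite ?conjT_unitmx.
Qed.

Lemma herm_code_is_dcode m (Z : {set 'M[F]_m}) :
    (forall A B, A \in Z -> B \in Z -> A != B -> A - B \in unitmx) ->
  is_dcode q (m + m) (herm_graph @: Z :|: [set herm_infty m m]).
Proof.
move=> Z_unit; split.
- by apply/set0Pn; exists (herm_infty m m); rewrite !inE eqxx orbT.
- move=> A; rewrite !inE => /orP[/imsetP[B _ ->] | /eqP->].
  + exact: herm_graph_hermitian.
  + exact: herm_infty_hermitian.
- move=> A B; rewrite !inE => /orP[/imsetP[A' A'Z ->] | /eqP->]
    /orP[/imsetP[B' B'Z ->] | /eqP->] neqAB.
  + by rewrite rank_herm_graphB // Z_unit //; apply: contraNneq neqAB => ->.
  + by rewrite rank_herm_graph_sub_infty.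
  + by rewrite -opprB mxrank_opp rank_herm_graph_sub_infty.
  + by rewrite eqxx in neqAB.
Qed.

End HermitianGraph.

Theorem theorem4p3 (F : finFieldType) (p k q m : nat)
  (hp : prime p) (hk : (0 < k)%N) (hq : q = (p ^ k)%N)
  (hF : #|F| = (q ^ 2)%N) (hm : (0 < m)%N)
  (Z : {set 'M[F]_m})
  (hZ : #|Z| = (q ^ (m + m))%N)
  (hdist : forall A B, A \in Z -> B \in Z -> A != B -> A - B \in unitmx) :
  let Y : {set 'M[F]_(m + m)} :=
    [set block_mx 1%:M (conjT q A) A (A *m conjT q A) | A in Z]
      :|: [set block_mx 0 0 0 1%:M] in
  is_dcode q (m + m) Y /\ #|Y| = (q ^ (m + m) + 1)%N.
Proof.
move=> Y; have -> : Y = herm_graph q @: Z :|: [set herm_infty F m m] by [].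
have pchF : p \in [pchar F].
  by apply: (card_finPcharP (n := k * 2)); rewrite // hF hq expnM.
have exprqD (x y : F) : (x + y) ^+ q = x ^+ q + y ^+ q.
  by rewrite hq exprD_pchar_pow.
have exprqK (x : F) : (x ^+ q) ^+ q = x by rewrite expr_card_sqrtK.
split; first exact: herm_code_is_dcode.
by rewrite card_herm_code ?hZ ?addn_gt0 ?hm.
Qed.
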